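(* For every graph $G$ on $[n]$ and every $k=2,3,\dots,n-2$, the polynomial $$\theta_k=\sum_{ij\in G}s_{ij}\sum_{\ell=0}^{k}x_i^{k-\ell}x_j^{\ell}$$ vanishes on the scattering correspondence $\mathcal V_G$.
   Context: $G$ is a simple graph on $[n]$, and $G_i$ denotes the set of neighbours of vertex $i$. The variables are $s_{ij}$ ($ij\in G$) and $x_1,\dots,x_n$. $\mathcal K_G$ is defined by $\sum_{j\in G_i}s_{ij}=0$ for $i\in[n]$. $\mathcal H$ is the union of the hyperplanes $x_i=x_j$ for $i<j$. The scattering correspondence is $$\mathcal V_G=\{(s,x)\in\mathbb P^{|G|-1}\times(\mathbb P^{n-1}\setminus\mathcal H): s\in\mathcal K_G,\ \textstyle\sum_{j\in G_i}s_{ij}/(x_i-x_j)=0\ \text{for all } i\in[n]\}.$$ *)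

From HB Require Import structures.
From mathcomp Require Import all_boot all_order all_algebra.
From mathcomp Require Import reals.
From mathcomp Require Import complex.
Set Implicit Arguments. Unset Strict Implicit. Unset Printing Implicit Defensive.
Import Order.TTheory GRing.Theory Num.Theory.
Local Open Scope ring_scope.

Definition simple_graph (n : nat) (G : rel 'I_n) : Prop :=
  symmetric G /\ irreflexive G.

(* Edge variables s_ij : represented by a symmetric function; only the
   values on edges ij \in G are used. *)
Definition edge_sym (n : nat) (F : Type) (s : 'I_n -> 'I_n -> F) : Prop :=
  forall i j, s i j = s j i.

(* The point s of P^{|G|-1} : not all edge coordinates vanish. *)
Definition edge_nonzero (F : nmodType) (n : nat) (G : rel 'I_n)
  (s : 'I_n -> 'I_n -> F) : Prop :=
  exists i j, G i j /\ s i j != 0.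

Definition in_KG (F : nmodType) (n : nat) (G : rel 'I_n)
  (s : 'I_n -> 'I_n -> F) : Prop :=
  forall i, \sum_(j | G i j) s i j = 0.

(* x \in P^{n-1} \ H : x nonzero with pairwise distinct coordinates. *)
Definition off_H (F : nmodType) (n : nat) (x : 'I_n -> F) : Prop :=
  (exists i, x i != 0) /\ injective x.

Definition scattering_eqs (F : fieldType) (n : nat) (G : rel 'I_n)
  (s : 'I_n -> 'I_n -> F) (x : 'I_n -> F) : Prop :=
  forall i, \sum_(j | G i j) s i j / (x i - x j) = 0.

Definition in_VG (F : fieldType) (n : nat) (G : rel 'I_n)
  (s : 'I_n -> 'I_n -> F) (x : 'I_n -> F) : Prop :=
  [/\ edge_nonzero G s, in_KG G s, off_H x & scattering_eqs G s x].

(* theta_k = sum_{ij in G} s_ij sum_{l=0}^k x_i^{k-l} x_j^l, each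
   unordered edge counted once (i < j). *)
Definition theta (F : comNzRingType) (n : nat) (G : rel 'I_n) (k : nat)
  (s : 'I_n -> 'I_n -> F) (x : 'I_n -> F) : F :=
  \sum_(i < n) \sum_(j < n | (i < j)%N && G i j)
     s i j * \sum_(l < k.+1) x i ^+ (k - l) * x j ^+ l.

From HB Require Import structures.
From mathcomp Require Import all_boot all_order all_algebra.
From mathcomp Require Import reals.
From mathcomp Require Import complex.
Import Order.TTheory GRing.Theory Num.Theory.
Local Open Scope ring_scope.

(* Multiply the i-th scattering equation by x_i^(k+1) and sum over i.  The
   two terms of an edge ij then combine, since
   (x_i^(k+1) - x_j^(k+1)) / (x_i - x_j) = sum_l x_i^(k-l) x_j^l,
   into the ij-summand of theta_k. *)

Lemma sum_symrel_lt (V : nmodType) (n : nat) (G : rel 'I_n)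
  (f : 'I_n -> 'I_n -> V) :
  symmetric G -> irreflexive G ->
  \sum_(i < n) \sum_(j < n | G i j) f i j =
  \sum_(i < n) \sum_(j < n | (i < j)%N && G i j) (f i j + f j i).
Proof.
move=> Gsym Girr.
under [RHS]eq_bigr => i _ do rewrite big_split /= big_mkcond [X in _ + X]big_mkcond /=.
rewrite big_split /= [X in _ + X]exchange_big -big_split /=.
apply: eq_bigr => i _; rewrite -big_split /= big_mkcond /=.
apply: eq_bigr => j _.
case: (ltngtP i j) => [_|_|/val_inj eij] /=.
- by rewrite addr0.
- by rewrite add0r Gsym.
- by rewrite eij Girr addr0.
Qed.

Lemma mulr_div_subXX_pair (F : fieldType) (a b c : F) (k : nat) : a != b ->
  c * a ^+ k.+1 / (a - b) + c * b ^+ k.+1 / (b - a) =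
  c * \sum_(l < k.+1) a ^+ (k - l) * b ^+ l.
Proof.
rewrite -subr_eq0 => ab_neq0.
rewrite -[b - a]opprB invrN mulrN -!mulrA -mulrBr -mulrBl subrXX /=.
by rewrite mulrAC mulfV // mul1r.
Qed.

Lemma theta_eq0 (F : fieldType) (n : nat) (G : rel 'I_n) (k : nat)
  (s : 'I_n -> 'I_n -> F) (x : 'I_n -> F) :
  simple_graph G -> edge_sym s -> injective x -> scattering_eqs G s x ->
  theta G k s x = 0.
Proof.
move=> [Gsym Girr] ssym xinj sc.
have weighted_sum :
    \sum_i \sum_(j | G i j) s i j * x i ^+ k.+1 / (x i - x j) = 0.
  apply: big1 => i _.
  transitivity (x i ^+ k.+1 * \sum_(j | G i j) s i j / (x i - x j)).
    by rewrite mulr_sumr; apply: eq_bigr => j _; rewrite mulrCA mulrA.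
  by rewrite sc mulr0.
rewrite sum_symrel_lt // in weighted_sum.
apply: etrans weighted_sum; apply: eq_bigr => i _; apply: eq_bigr => j /andP[_ Gij].
have xij : x i != x j by apply: contraTneq Gij => /xinj ->; rewrite Girr.
by rewrite (ssym j i) (@mulr_div_subXX_pair _ _ _ (s i j) k xij).
Qed.

Theorem mainTheorem5 (R : realType) (n : nat) (G : rel 'I_n) (k : nat)
  (s : 'I_n -> 'I_n -> R[i]) (x : 'I_n -> R[i]) :
  simple_graph G -> (2 <= k)%N -> (k <= n - 2)%N ->
  edge_sym s -> in_VG G s x ->
  theta G k s x = 0.
Proof.
move=> Gsimple _ _ ssym [_ _ [_ xinj] sc].
exact: theta_eq0.
Qed.
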